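(* Let $f,g:\mathbb{N}\to\mathbb{C}$ be functions, neither identically zero, such that \[ g(n)=\sum_{k=1}^{n}\binom{n-1}{k-1} f(k)\quad\text{for all } n\in\mathbb{N}. \] Then at least one of $\{n: f(n)\neq 0\}$ and $\{n: g(n)\neq 0\}$ is infinite. *)

From HB Require Import structures.
From mathcomp Require Import all_boot all_order all_algebra.
From mathcomp Require Import complex.
From mathcomp Require Import boolp classical_sets cardinality reals.

(** The binomial transform [b m = \sum_j 'C(m, j) a j] satisfies the Pascal
    recurrence [b (m + 1) = b m + b' m], where [b'] is the transform of the
    shifted sequence [j |-> a (j + 1)].  If [a] is nonzero with last nonzero
    term [a d], induction on [d] shows that [b] is not eventually zero: for
    [d = 0] it is the constant [a 0], and otherwise [b'] takes a nonzero value
    at some [m >= M], so that [b m] and [b (m + 1)] cannot both vanish.  Hence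
    [b] has infinite support.  Here [g (m + 1)] is the transform of
    [m |-> f (m + 1)]. *)
From HB Require Import structures.
From mathcomp Require Import all_boot all_order all_algebra.
From mathcomp Require Import complex.
From mathcomp Require Import boolp classical_sets cardinality reals.
Import GRing.Theory Num.Theory.
Local Open Scope ring_scope.
Local Open Scope classical_set_scope.

Lemma finite_set_nat_bounded (A : set nat) :
  finite_set A -> exists B, forall n, A n -> (n < B)%N.
Proof.
move=> /finite_seqP [s ->]; exists (\max_(x <- s) x.+1)%N => n sn.
exact: (leq_bigmax_seq n sn).
Qed.

Lemma finite_set_succ_preimage (P : nat -> Prop) :
  finite_set [set n | (0 < n)%N /\ P n] -> finite_set [set m | P m.+1].
Proof.
move=> /(finite_image predn); apply: sub_finite_set => m Pm.
by exists m.+1.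
Qed.

Section BinomialTransform.
Context {S : pzSemiRingType}.
Implicit Types a : nat -> S.

Definition binom_transform a m : S := \sum_(j < m.+1) 'C(m, j)%:R * a j.

Lemma binom_transformS a m :
  binom_transform a m.+1 = binom_transform a m + binom_transform (a \o succn) m.
Proof.
rewrite /binom_transform big_ord_recl [in RHS]big_ord_recl !bin0.
under eq_bigr => i _ do rewrite /= binS natrD mulrDl.
rewrite big_split /= -!addrA; congr (_ + (_ + _)).
by rewrite big_ord_recr /= bin_small // mul0r addr0.
Qed.

Lemma binom_transform_not_eventually0 a d :
  (forall j, (d < j)%N -> a j = 0) -> a d != 0 ->
  forall M, exists2 m, (M <= m)%N & binom_transform a m != 0.
Proof.
elim: d a => [|d IHd] a a_gt_d a_d M.
  exists M => //; rewrite /binom_transform big_ord_recl bin0 mul1r big1 ?addr0 //.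
  by move=> i _; rewrite a_gt_d ?mulr0.
have [m leMm Ta'm] := IHd (a \o succn) (fun j lt_dj => a_gt_d j.+1 lt_dj) a_d M.
have [Tam0 | Tam] := eqVneq (binom_transform a m) 0; last by exists m.
exists m.+1; first exact: leqW.
by rewrite binom_transformS Tam0 add0r.
Qed.

Lemma binom_transform_infinite_support a :
  finite_set [set j | a j != 0] -> (exists j, a j != 0) ->
  infinite_set [set m | binom_transform a m != 0].
Proof.
move=> /finite_set_nat_bounded [B ltB] [j a_j] /finite_set_nat_bounded [M ltM].
have supp_bounded i : a i != 0 -> (i <= B)%N by move/ltB/ltnW.
have [d a_d max_d] := ex_maxnP (ex_intro _ j a_j) supp_bounded.
have a_gt_d i : (d < i)%N -> a i = 0.
  by move=> lt_di; apply/eqP; apply: contraTT lt_di => /max_d; rewrite -leqNgt.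
have [m leMm /ltM] := binom_transform_not_eventually0 _ _ a_gt_d a_d M.
by rewrite ltnNge leMm.
Qed.

End BinomialTransform.

Theorem proposition5p1 (R : realType) (f g : nat -> R[i])
  (hf : exists n : nat, (0 < n)%N /\ f n != 0)
  (hg : exists n : nat, (0 < n)%N /\ g n != 0)
  (hfg : forall n : nat, (0 < n)%N ->
     g n = \sum_(1 <= k < n.+1) ('C(n.-1, k.-1))%:R * f k) :
  ~ finite_set [set n : nat | (0 < n)%N /\ f n != 0] \/
  ~ finite_set [set n : nat | (0 < n)%N /\ g n != 0].
Proof.
have [f_fin|] := pselect (finite_set [set n | (0 < n)%N /\ f n != 0]); last by left.
right => /finite_set_succ_preimage g_fin.
have g_transform m : g m.+1 = binom_transform (f \o succn) m.
  by rewrite hfg // big_add1 big_mkord.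
have f_shift_fin : finite_set [set j | (f \o succn) j != 0].
  exact: (finite_set_succ_preimage (fun n => f n != 0)).
have f_shift_nz : exists j, (f \o succn) j != 0.
  by case: hf => -[|n] [] // _ f_n; exists n.
apply: (binom_transform_infinite_support _ f_shift_fin f_shift_nz).
suff -> : [set m | binom_transform (f \o succn) m != 0] = [set m | g m.+1 != 0] by [].
by apply: eq_set => m; rewrite g_transform.
Qed.
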